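(* Let $G$ be a finite simple graph with $n$ vertices and minimum degree $\delta$ satisfying $1{,}000 \le \delta \le 24{,}000$. Then $$\gamma_s(G) \le \frac{\sqrt{\ln(\delta+1)\,(11.8 - 0.48\ln\delta)} + 0.25}{\sqrt{\delta+1}}\, n.$$
   Context: For a vertex $v$ of $G$, $N[v]$ denotes the closed neighbourhood of $v$ (i.e. $v$ together with its neighbours). A signed domination function of $G$ is a function $f: V(G) \to \{-1, 1\}$ such that $\sum_{x \in N[v]} f(x) \ge 1$ for every vertex $v \in V(G)$. The weight of $f$ is $f(V(G)) = \sum_{v \in V(G)} f(v)$. The signed domination number $\gamma_s(G)$ is the minimum weight of a signed domination function of $G$. *)

From mathcomp Require Import all_boot all_order all_algebra.
Set Implicit Arguments. Unset Strict Implicit. Unset Printing Implicit Defensive.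
Import Order.TTheory GRing.Theory Num.Theory.

Definition simple_graph (V : finType) (e : rel V) : Prop :=
  symmetric e /\ irreflexive e.

Definition deg (V : finType) (e : rel V) (v : V) : nat := #|[set u | e v u]|.

Definition is_min_degree (V : finType) (e : rel V) (d : nat) : Prop :=
  (forall v, d <= deg e v) /\ exists v, deg e v = d.

Definition closed_nbhd (V : finType) (e : rel V) (v : V) : {set V} :=
  v |: [set u | e v u].

Definition signed_dom_fun (V : finType) (e : rel V) (f : V -> int) : Prop :=
  (forall v, f v = 1%R \/ f v = (-1)%R) /\
  (forall v, (1 <= \sum_(x in closed_nbhd e v) f x)%R).

Definition weight (V : finType) (f : V -> int) : int := (\sum_(x : V) f x)%R.

Definition signed_domination_number (V : finType) (e : rel V) (g : int) : Prop :=
  (exists f, signed_dom_fun e f /\ weight f = g) /\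
  (forall f, signed_dom_fun e f -> (g <= weight f)%R).

(* Mark every vertex independently with probability p = (1 - x)/2 and give value -1 to the
   marked vertices none of whose closed neighbourhoods is "crowded", i.e. at least half
   marked; every other vertex gets +1.  This is always a signed dominating function, and
   its weight is at most n(1 - 2p) plus twice the total size of the crowded
   neighbourhoods.  The Chernoff-type estimate [crowded v] <= (1 + x)^(2k - |N[v]|), with
   k the number of marked vertices of N[v], has expectation (1 - x^2/2)^|N[v]|, so some
   marking gives weight at most n (x + 2 (delta + 1) exp(-x^2 (delta + 1) / 2)).  With
   x = 6.5 / sqrt(delta + 1) this is at most 7 n / sqrt(delta + 1), and for
   1000 <= delta <= 24000 the coefficient of the statement is at least 7. *)
From mathcomp Require Import all_boot all_order all_algebra.
From mathcomp Require Import all_classical all_reals all_analysis.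
From mathcomp Require Import ring lra zify.
Import Order.TTheory GRing.Theory Num.Theory.
Local Open Scope ring_scope.

Section BernoulliProduct.
Context {R : realDomainType} {V : finType} (p : R).

Definition bernoulli_weight (f : {ffun V -> bool}) : R :=
  \prod_x (if f x then p else 1 - p).

Definition expectation (X : {ffun V -> bool} -> R) : R :=
  \sum_f bernoulli_weight f * X f.

Lemma expectation_prod (A : {set V}) (z : R) :
  expectation (fun f => \prod_(y in A) (if f y then z else 1)) =
  (p * z + (1 - p)) ^+ #|A|.
Proof.
rewrite /expectation /bernoulli_weight.
under eq_bigr => f _ do rewrite [X in _ * X]big_mkcond -big_split /=.
rewrite -(bigA_distr_bigA (fun y (b : bool) => (if b then p else 1 - p) *
   (if y \in A then (if b then z else 1) else 1))) /=.
rewrite -prodr_const [RHS]big_mkcond /=; apply: eq_bigr => y _.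
by rewrite big_bool /=; case: (y \in A); rewrite ?mulr1 //; ring.
Qed.

Lemma expectation_cst (c : R) : expectation (fun => c) = c.
Proof.
have sum1 : \sum_f bernoulli_weight f = 1.
  rewrite -(expr0 (p * 0 + (1 - p))) -(cards0 V) -expectation_prod.
  by apply: eq_bigr => f _; rewrite big_set0 mulr1.
by rewrite /expectation -mulr_suml sum1 mul1r.
Qed.

Lemma expectationD (X Y : {ffun V -> bool} -> R) :
  expectation (fun f => X f + Y f) = expectation X + expectation Y.
Proof. by rewrite /expectation -big_split; apply: eq_bigr => f _; rewrite mulrDr. Qed.

Lemma expectationB (X Y : {ffun V -> bool} -> R) :
  expectation (fun f => X f - Y f) = expectation X - expectation Y.
Proof. by rewrite /expectation -sumrB; apply: eq_bigr => f _; rewrite mulrBr. Qed.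

Lemma expectationZ (c : R) (X : {ffun V -> bool} -> R) :
  expectation (fun f => c * X f) = c * expectation X.
Proof. by rewrite /expectation mulr_sumr; apply: eq_bigr => f _; rewrite mulrCA. Qed.

Lemma expectation_sum (I : finType) (X : I -> {ffun V -> bool} -> R) :
  expectation (fun f => \sum_i X i f) = \sum_i expectation (X i).
Proof.
rewrite /expectation exchange_big /=; apply: eq_bigr => f _.
by rewrite mulr_sumr.
Qed.

Lemma eq_expectation (X Y : {ffun V -> bool} -> R) :
  X =1 Y -> expectation X = expectation Y.
Proof. by move=> XY; apply: eq_bigr => f _; rewrite XY. Qed.

Lemma expectation_marked (x : V) : expectation (fun f => (f x)%:R) = p.
Proof.
rewrite (@eq_expectation _ (fun f => 1 + (-1) * \prod_(y in [set x]) (if f y then 0 else 1))).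
  rewrite expectationD expectationZ expectation_cst expectation_prod cards1.
  by rewrite expr1; ring.
by move=> f; rewrite big_set1; case: (f x); rewrite /= ?mulr0 ?mulr1 ?addr0 ?subrr.
Qed.

Lemma exists_le_expectation (X : {ffun V -> bool} -> R) :
  0 <= p <= 1 -> exists f, X f <= expectation X.
Proof.
move=> /andP[p0 p1].
have [f _ f_min] := arg_minP X (i0 := [ffun => true]) (P := predT) isT.
exists f; rewrite -[X f]expectation_cst; apply: ler_sum => g _.
apply: ler_wpM2l; last exact: f_min.
by apply: prodr_ge0 => y _; case: (g y); rewrite ?subr_ge0.
Qed.

End BernoulliProduct.

Section Signing.
Context {V : finType} (e : rel V) (f : {ffun V -> bool}).

Definition crowded (v : V) : bool :=
  (#|closed_nbhd e v| <= 2 * #|[set y in closed_nbhd e v | f y]|)%N.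

Definition signing (x : V) : int :=
  if f x && [forall v, (x \in closed_nbhd e v) ==> ~~ crowded v] then -1 else 1.

Lemma mem_closed_nbhd (v : V) : v \in closed_nbhd e v.
Proof. exact: setU11. Qed.

Lemma signing_signed_dom : signed_dom_fun e signing.
Proof.
split=> [x|v]; first by rewrite /signing; case: ifP; [right|left].
have sum_cnt : \sum_(x in closed_nbhd e v) (f x)%:R
               = #|[set y in closed_nbhd e v | f y]|%:R :> int.
  rewrite -natr_sum -sum1_card big_mkcond /= [in RHS]big_mkcond /=.
  by congr _%:R; apply: eq_bigr => x _; rewrite inE; case: (x \in _); case: (f x).
case cv: (crowded v).
  have -> : \sum_(x in closed_nbhd e v) signing x = #|closed_nbhd e v|%:R.
    rewrite -sum1_card natr_sum; apply: eq_bigr => x xv; rewrite /signing.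
    suff -> : [forall u, (x \in closed_nbhd e u) ==> ~~ crowded u] = false by rewrite andbF.
    by apply/negbTE/forallPn; exists v; rewrite xv cv.
  by rewrite ler1n card_gt0; apply/set0Pn; exists v; apply: mem_closed_nbhd.
have signing_ge x : 1 - 2 * (f x)%:R <= signing x.
  by rewrite /signing; case: (f x); case: [forall _, _].
apply: le_trans (ler_sum _ (fun x _ => signing_ge x)).
have k_lt : (2 * #|[set y in closed_nbhd e v | f y]| < #|closed_nbhd e v|)%N.
  by rewrite ltnNge -/(crowded v) cv.
by rewrite sumrB sumr_const -mulr_sumr sum_cnt; lia.
Qed.

Lemma weight_signing_le (R : realDomainType) :
  (weight signing)%:~R <=
  \sum_x (1 - 2 * (f x)%:R) + 2 * \sum_v #|closed_nbhd e v|%:R * (crowded v)%:R :> R.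
Proof.
have count_crowded : \sum_v #|closed_nbhd e v|%:R * (crowded v)%:R
    = \sum_x \sum_v ((crowded v) && (x \in closed_nbhd e v))%:R :> R.
  rewrite exchange_big /=; apply: eq_bigr => v _.
  rewrite -sum1_card natr_sum mulr_suml big_mkcond /=; apply: eq_bigr => x _.
  by case: (x \in _); case: (crowded v); rewrite ?mul1r ?mulr0.
rewrite count_crowded mulr_sumr -big_split /= /weight rmorph_sum /=.
apply: ler_sum => x _.
have crowded_ge0 : 0 <= \sum_v ((crowded v) && (x \in closed_nbhd e v))%:R :> R.
  exact: sumr_ge0.
rewrite /signing; case fx: (f x) => /=; last lra.
case: ifP => [_|/negbT/forallPn[v]]; first lra.
rewrite negb_imply negbK => /andP[xv cv].
rewrite (bigD1 v) //= cv xv /=.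
have : 0 <= \sum_(u | u != v) ((crowded u) && (x \in closed_nbhd e u))%:R :> R.
  exact: sumr_ge0.
lra.
Qed.

(* Markov's inequality for the moment generating function of the number of marked vertices. *)
Lemma crowded_le_prod (R : realFieldType) (s : R) (v : V) : 1 <= s ->
  (crowded v)%:R <= \prod_(y in closed_nbhd e v) (if f y then s ^+ 2 else 1) /
                    s ^+ #|closed_nbhd e v|.
Proof.
move=> s1; have s_gt0 : 0 < s by lra.
have prod_marked : \prod_(y in closed_nbhd e v) (if f y then s ^+ 2 else 1)
                   = s ^+ (2 * #|[set y in closed_nbhd e v | f y]|).
  rewrite -big_mkcondr prodr_const exprM; congr (_ ^+ _).
  by apply: eq_card => y; rewrite inE.
rewrite prod_marked; case cv: (crowded v) => /=.
  by rewrite ler_pdivlMr ?exprn_gt0 // mul1r; apply: ler_weXn2l.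
by apply: divr_ge0; apply: exprn_ge0; lra.
Qed.

End Signing.

Lemma card_closed_nbhd {V : finType} (e : rel V) (v : V) :
  irreflexive e -> #|closed_nbhd e v| = (deg e v).+1.
Proof. by move=> irr; rewrite /closed_nbhd cardsU1 inE irr. Qed.

Section Exponential.
Context {R : realType}.

Lemma exprD1_le_expR (x : R) (n : nat) : -1 <= x -> (1 + x) ^+ n <= expR (n%:R * x).
Proof.
move=> x_ge; rewrite expRM_natl; apply: lerXn2r; rewrite ?nnegrE ?expR_ge0 //.
  lra.
exact: expR_ge1Dx.
Qed.

(* t |-> t exp(-a t) decreases beyond its maximum at t = 1/a. *)
Lemma mul_expRN_le (a t u : R) : 0 <= a -> 1 <= a * t -> t <= u ->
  u * expR (- (a * u)) <= t * expR (- (a * t)).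
Proof.
move=> a0 at1 tu; have t0 : 0 < t by nra.
have -> : - (a * t) = a * (u - t) + - (a * u) by ring.
rewrite expRD mulrA ler_wpM2r ?expR_ge0 //.
apply: (le_trans _ (ler_wpM2l (ltW t0) (expR_ge1Dx (a * (u - t))))).
nra.
Qed.

Lemma expR5_le : expR 5 <= 1000 :> R.
Proof.
have := exprD1_le_expR (- (1 / 4)) 20; rewrite (_ : 20%:R * _ = -5); last lra.
set t := _ ^+ 20 => t_le.
have t_ge : 1 / 1000 <= t by rewrite /t !exprS expr0; lra.
have := expRxMexpNx_1 (5 : R); have := expR_gt0 (5 : R).
nra.
Qed.

Lemma expR169_8_ge : 4 * 155 ^+ 3 <= expR (169 / 8) :> R.
Proof.
have base : 4 * 155 ^+ 3 <= (1 + 1 / 2) ^+ 42 :> R by rewrite !exprS expr0; lra.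
apply: (le_trans base (le_trans (exprD1_le_expR _ 42 _) _)); first lra.
by rewrite ler_expR; lra.
Qed.

End Exponential.

Section SignedDominationBound.
Context {R : realType} {V : finType} (e : rel V).

Definition signing_bound (s : R) (f : {ffun V -> bool}) : R :=
  \sum_x (1 - 2 * (f x)%:R) +
  2 * \sum_v #|closed_nbhd e v|%:R *
        (\prod_(y in closed_nbhd e v) (if f y then s ^+ 2 else 1) / s ^+ #|closed_nbhd e v|).

Lemma weight_signing_le_bound (s : R) (f : {ffun V -> bool}) : 1 <= s ->
  (weight (signing e f))%:~R <= signing_bound s f.
Proof.
move=> s1; apply: (le_trans (weight_signing_le e f R)); rewrite lerD2l.
apply: ler_wpM2l => //; apply: ler_sum => v _.
by apply: ler_wpM2l; [exact: ler0n | exact: crowded_le_prod].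
Qed.

Lemma expectation_signing_bound (p s : R) : s != 0 ->
  expectation p (signing_bound s) =
  #|V|%:R * (1 - 2 * p) +
  2 * \sum_v #|closed_nbhd e v|%:R * ((p * s ^+ 2 + (1 - p)) / s) ^+ #|closed_nbhd e v|.
Proof.
move=> s0; rewrite /signing_bound expectationD expectationZ !expectation_sum.
congr (_ + 2 * _).
  rewrite -sumr_const mulr_suml; apply: eq_bigr => x _.
  by rewrite expectationB expectationZ expectation_cst expectation_marked mul1r.
apply: eq_bigr => v _; rewrite expectationZ; congr (_ * _).
under eq_expectation => f do rewrite mulrC.
by rewrite expectationZ expectation_prod expr_div_n mulrC.
Qed.

Theorem exists_signed_dom_fun_weight_le (delta : nat) (x : R) :
  irreflexive e -> (forall v, (delta <= deg e v)%N) -> 0 <= x <= 1 ->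
  2 <= x ^+ 2 * delta.+1%:R ->
  exists g, signed_dom_fun e g /\
    (weight g)%:~R <= #|V|%:R * (x + 2 * delta.+1%:R * expR (- (x ^+ 2 / 2 * delta.+1%:R))).
Proof.
move=> irr mindeg /andP[x0 x1] xD.
pose p := (1 - x) / 2; pose s := 1 + x; pose a := x ^+ 2 / 2.
have p01 : 0 <= p <= 1 by apply/andP; split; rewrite /p; lra.
have s1 : 1 <= s by rewrite /s; lra.
have [f f_le] := exists_le_expectation _ (signing_bound s) p01.
exists (signing e f); split; first exact: signing_signed_dom.
apply: (le_trans (weight_signing_le_bound _ f s1)); apply: (le_trans f_le).
rewrite expectation_signing_bound; last by rewrite /s; apply/lt0r_neq0; lra.
have -> : (p * s ^+ 2 + (1 - p)) / s = 1 - a by rewrite /p /s /a; field; lra.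
have -> : 1 - 2 * p = x by rewrite /p; field.
have a0 : 0 <= a by rewrite /a; nra.
have a1 : a <= 1 by rewrite /a; nra.
have term v : #|closed_nbhd e v|%:R * (1 - a) ^+ #|closed_nbhd e v|
              <= delta.+1%:R * expR (- (a * delta.+1%:R)).
  set N := #|closed_nbhd e v|.
  have DN : delta.+1%:R <= N%:R :> R by rewrite ler_nat /N (card_closed_nbhd _ _ irr) ltnS.
  apply: (le_trans (ler_wpM2l (ler0n _ _) (exprD1_le_expR (- a) N _))); first lra.
  rewrite mulrN [N%:R * a]mulrC; apply: mul_expRN_le => //.
  by rewrite /a; lra.
rewrite -/a mulrDr lerD2l.
apply: (le_trans (ler_wpM2l _ (ler_sum _ (fun v _ => term v)))) => //.
by rewrite sumr_const -(mulr_natl (_ * expR _)) mulrCA !mulrA.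
Qed.

End SignedDominationBound.

Lemma decay_bound_le_seven {R : realType} (c : R) : 31 <= c <= 155 ->
  13 / (2 * c) + 2 * c ^+ 2 * expR (- ((13 / (2 * c)) ^+ 2 / 2 * c ^+ 2)) <= 7 / c.
Proof.
move=> /andP[c_lo c_hi].
have -> : (13 / (2 * c)) ^+ 2 / 2 * c ^+ 2 = 169 / 8 by field; lra.
set y := expR (- (169 / 8)).
have cube_y : 4 * c ^+ 3 * y <= 1.
  rewrite -[leRHS](expRxMexpNx_1 (169 / 8)) ler_wpM2r ?expR_ge0 //.
  apply: (le_trans _ expR169_8_ge); rewrite ler_wpM2l //.
  by apply: lerXn2r; rewrite ?nnegrE; lra.
have -> : 13 / (2 * c) + 2 * c ^+ 2 * y = 7 / c - (1 - 4 * c ^+ 3 * y) / (2 * c).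
  by field; lra.
have : 0 <= (1 - 4 * c ^+ 3 * y) / (2 * c) by apply: divr_ge0; lra.
lra.
Qed.

Lemma seven_le_coefficient {R : realType} (delta : nat) : (1000 <= delta <= 24000)%N ->
  7 <= Num.sqrt (ln (delta.+1%:R : R) * (118 / 10 - 48 / 100 * ln (delta%:R : R))) + 1 / 4.
Proof.
move=> /andP[d_lo d_hi].
set L := ln _; set l := ln (delta%:R).
have L_lo : 5 <= L.
  rewrite /L -(expRK 5) ler_ln ?posrE ?expR_gt0 ?ltr0n //.
  apply: (le_trans expR5_le); rewrite ler_nat; lia.
have L_hi : L <= 15.
  rewrite /L -(expRK 15) ler_ln ?posrE ?expR_gt0 ?ltr0n //.
  have two15 : 2 ^+ 15 <= expR 15 :> R.
    by rewrite -[X in expR X]mulr1; apply: exprD1_le_expR.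
  by apply: le_trans two15; rewrite -natrX ler_nat ltnS (leq_trans d_hi).
have lL : l <= L by rewrite /l /L ler_ln ?posrE ?ltr0n ?ler_nat //; lia.
have P_ge : (27 / 4) ^+ 2 <= L * (118 / 10 - 48 / 100 * l).
  have : 0 <= (L - 5) * (15 - L) by apply: mulr_ge0; lra.
  have : 0 <= L * (L - l) by apply: mulr_ge0; lra.
  rewrite expr2; nra.
have : Num.sqrt ((27 / 4) ^+ 2) <= Num.sqrt (L * (118 / 10 - 48 / 100 * l)).
  by rewrite ler_sqrt //; apply: le_trans P_ge; apply: sqr_ge0.
rewrite sqrtr_sqr ger0_norm //; lra.
Qed.

Theorem corollary2 (R : realType) (V : finType) (e : rel V) (delta : nat) (gs : int) :
  simple_graph e ->
  is_min_degree e delta ->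
  (1000 <= delta <= 24000)%N ->
  signed_domination_number e gs ->
  (gs%:~R : R) <=
    (Num.sqrt (ln (delta.+1%:R : R) * (118 / 10 - 48 / 100 * ln (delta%:R : R))) + 1 / 4)
      / Num.sqrt (delta.+1%:R : R) * (#|V|%:R : R).
Proof.
move=> [_ irr] [mindeg _] d_range [_ gs_min].
set c := Num.sqrt (delta.+1%:R : R).
have c2 : c ^+ 2 = delta.+1%:R by rewrite sqr_sqrtr ?ler0n.
have c0 : 0 <= c := sqrtr_ge0 _.
have c_range : 31 <= c <= 155.
  have : (1001 <= delta.+1 <= 24001)%N by [].
  rewrite -2!(ler_nat R) -c2 => /andP[lo hi]; apply/andP; split; nra.
have [lo hi] := andP c_range.
have x01 : 0 <= 13 / (2 * c) <= 1.
  by apply/andP; split; [apply: divr_ge0 | rewrite ler_pdivrMr]; lra.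
have x2D : 2 <= (13 / (2 * c)) ^+ 2 * delta.+1%:R.
  by rewrite -c2 (_ : _ * _ = 169 / 4); [lra | field; lra].
have [g [g_dom g_weight]] := exists_signed_dom_fun_weight_le _ _ _ irr mindeg x01 x2D.
apply: (le_trans _ (le_trans g_weight _)); first by rewrite ler_int; exact: gs_min.
rewrite mulrC ler_wpM2r //.
have decay := decay_bound_le_seven c c_range; rewrite c2 in decay.
apply: (le_trans decay).
rewrite ler_wpM2r ?invr_ge0 //.
exact: seven_le_coefficient.
Qed.
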